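(* Let $B$ be a unital $C^*$-algebra with a $*$-isomorphism $\psi:B\to M_n\otimes B$ satisfying $\psi(1)=I_n\otimes1$, and suppose that $A$ is a maximal abelian $*$-subalgebra of $B$ with $\sigma_1(A)\subset A$. Then $\psi_m(A)\subset M_n^{\otimes m}\otimes A$ for all $m\ge0$.
   Context: $M_n=M_n(\mathbb{C})$, identity $I_n$. Define $\psi_0=\mathrm{id}_B$, $\psi_{m+1}=(\mathrm{id}^{\otimes m}\otimes\psi)\circ\psi_m:B\to M_n^{\otimes(m+1)}\otimes B$. With $f(b)=I_n\otimes b$, $\sigma_1=\psi^{-1}\circ f:B\to B$. *)

From HB Require Import structures.
From mathcomp Require Import all_boot all_order all_algebra.
From mathcomp Require Import reals.
From mathcomp.real_closed Require Import complex.

Set Implicit Arguments.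
Unset Strict Implicit.
Unset Printing Implicit Defensive.

Import Order.TTheory GRing.Theory Num.Theory.
Local Open Scope ring_scope.

Section CStar.
Variables (R : realType) (B : algType R[i]).

Definition Cauchy_seq (nrm : B -> R) (u : nat -> B) : Prop :=
  forall e : R, 0 < e -> exists N : nat,
    forall p q : nat, (N <= p)%N -> (N <= q)%N -> nrm (u p - u q) < e.

Definition converges_to (nrm : B -> R) (u : nat -> B) (l : B) : Prop :=
  forall e : R, 0 < e -> exists N : nat, forall p : nat, (N <= p)%N -> nrm (u p - l) < e.

Definition is_Cstar_algebra (star : B -> B) (nrm : B -> R) : Prop :=
      (forall x y, star (x + y) = star x + star y)/\
      (forall (c : R[i]) x, star (c *: x) = (conjc c) *: star x)/\
      (forall x y, star (x * y) = star y * star x)/\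
      (forall x, star (star x) = x)/\
      (forall x, nrm x = 0 -> x = 0)/\
      (forall x y, nrm (x + y) <= nrm x + nrm y)/\
      (forall (c : R[i]) x, nrm (c *: x) = ComplexField.Normc.normc c * nrm x)/\
      (forall x y, nrm (x * y) <= nrm x * nrm y)/\
      (forall x, nrm (star x * x) = nrm x ^+ 2) /\
      (forall u, Cauchy_seq nrm u -> exists l, converges_to nrm u l).

(* The *-algebra M_n (x) B, identified with n x n matrices over B; its       *)
(* involution is the conjugate transpose (X^* )_{ij} = (X_{ji})^*.           *)
Definition mx_star (star : B -> B) (n : nat) (X : 'M[B]_n) : 'M[B]_n :=
  \matrix_(i, j) star (X j i).

Definition is_star_iso (star : B -> B) (n : nat) (psi : B -> 'M[B]_n) : Prop :=
  [/\ (forall x y, psi (x + y) = psi x + psi y),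
      (forall (c : R[i]) x, psi (c *: x) = map_mx (fun y => c *: y) (psi x)),
      (forall x y, psi (x * y) = psi x *m psi y),
      (forall x, psi (star x) = mx_star star (psi x)) &
      bijective psi].

Definition is_star_subalgebra (star : B -> B) (A : B -> Prop) : Prop :=
  [/\ A 0,
      (forall x y, A x -> A y -> A (x + y)),
      (forall (c : R[i]) x, A x -> A (c *: x)),
      (forall x y, A x -> A y -> A (x * y)) &
      (forall x, A x -> A (star x))].

Definition is_abelian (A : B -> Prop) : Prop :=
  forall x y, A x -> A y -> x * y = y * x.

Definition is_masa (star : B -> B) (A : B -> Prop) : Prop :=
  [/\ is_star_subalgebra star A, is_abelian A &
      forall A' : B -> Prop, is_star_subalgebra star A' -> is_abelian A' ->
        (forall x, A x -> A' x) -> forall x, A' x -> A x].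

(* psi_m : B -> M_n^{(x) m} (x) B, where an element of M_n^{(x) m} (x) B is  *)
(* encoded by its B-valued matrix entries indexed by multi-indices          *)
(* (m-tuples of 'I_n).  The HEAD of a tuple indexes the LAST M_n tensor     *)
(* factor (the one adjacent to B), so that                                  *)
(*   psi_{m+1} = (id^{(x) m} (x) psi) o psi_m                              *)
(* reads psi_{m+1}(b)[(k::I),(l::J)] = psi(psi_m(b)[I,J])[k,l].             *)
Fixpoint psi_iter (n : nat) (psi : B -> 'M[B]_n) (m : nat) {struct m} :
    B -> m.-tuple 'I_n -> m.-tuple 'I_n -> B :=
  match m return B -> m.-tuple 'I_n -> m.-tuple 'I_n -> B with
  | 0 => fun b _ _ => b
  | m'.+1 => fun b (I J : m'.+1.-tuple 'I_n) =>
      psi (@psi_iter n psi m' b (behead_tuple I) (behead_tuple J)) (thead I) (thead J)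
  end.

End CStar.

From HB Require Import structures.
From mathcomp Require Import all_boot all_order all_algebra.
From mathcomp Require Import reals.
From mathcomp.real_closed Require Import complex.
Import Order.TTheory GRing.Theory Num.Theory.
Local Open Scope ring_scope.

(* A masa A contains everything commuting with it: a self-adjoint h commuting
   with A generates, together with A, an abelian *-algebra (the bicommutant of
   A + {h}), so h is in A by maximality, and every element of the commutant is a
   complex combination of two such h.  If a is in A and b is in A, then so is
   sigma_1(b), whose image under psi is the scalar matrix b; applying psi to
   a sigma_1(b) = sigma_1(b) a shows that every entry of psi(a) commutes with
   b, hence lies in A. *)

Lemma conjc_i (R : rcfType) : conjc ('i%C : R[i]) = - 'i%C.
Proof. by apply/eqP; rewrite eq_complex /= oppr0 !eqxx. Qed.

Section Commutant.
Set Implicit Arguments.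
Variables (R : realType) (B : algType R[i]) (star : B -> B).
Hypotheses (starD : forall x y, star (x + y) = star x + star y)
  (starZ : forall (c : R[i]) x, star (c *: x) = conjc c *: star x)
  (starM : forall x y, star (x * y) = star y * star x)
  (starK : forall x, star (star x) = x).

Definition commutant (S : B -> Prop) : B -> Prop :=
  fun z => forall s, S s -> z * s = s * z.

Definition star_closed (S : B -> Prop) : Prop := forall s, S s -> S (star s).

Lemma star_closed_commutant S : star_closed S -> star_closed (commutant S).
Proof.
move=> Sstar z Sz s Ss; have /(congr1 star) := Sz _ (Sstar _ Ss).
by rewrite !starM starK => ->.
Qed.

Lemma star_subalgebra_commutant S :
  star_closed S -> is_star_subalgebra star (commutant S).
Proof.
move=> Sstar; split.
- by move=> z _; rewrite mul0r mulr0.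
- by move=> x y Sx Sy z Sz; rewrite mulrDl mulrDr Sx // Sy.
- by move=> c x Sx z Sz; rewrite -scalerAl -scalerAr Sx.
- by move=> x y Sx Sy z Sz; rewrite -mulrA Sy // mulrA Sx // mulrA.
- exact: star_closed_commutant.
Qed.

Lemma sub_bicommutant S x : S x -> commutant (commutant S) x.
Proof. by move=> Sx z Sz; rewrite Sz. Qed.

Lemma abelian_bicommutant S : is_abelian S -> is_abelian (commutant (commutant S)).
Proof. by move=> Sab x y Sx Sy; apply: Sx => s Ss; apply: Sy => t St; apply: Sab. Qed.

Variable A : B -> Prop.
Hypothesis Amasa : is_masa star A.

Lemma masa_selfadjoint_commutant h : star h = h -> commutant A h -> A h.
Proof.
case: (Amasa) => -[_ _ _ _ Astar] Aab Amax hsa Ah.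
pose S x := A x \/ x = h.
have Sstar : star_closed S by move=> s [As|->]; [left; apply: Astar | right].
have Sab : is_abelian S.
  by move=> x y [Ax|->] [Ay|->] //; [apply: Aab | rewrite Ah | rewrite Ah].
apply: (Amax (commutant (commutant S))).
- exact/star_subalgebra_commutant/star_closed_commutant.
- exact: abelian_bicommutant.
- by move=> x Ax; apply: sub_bicommutant; left.
- by apply: sub_bicommutant; right.
Qed.

Lemma star_opp x : star (- x) = - star x.
Proof. by rewrite -scaleN1r starZ rmorphN1 scaleN1r. Qed.

Lemma cartesian_decomposition y :
  y = 2^-1 *: ((y + star y) + 'i%C *: ('i%C *: (star y - y))).
Proof.
rewrite scalerA -expr2 sqr_i scaleN1r opprB addrACA subrr addr0 -mulr2n.
by rewrite -[y *+ 2](@scaler_nat R[i]) scalerA mulVf ?scale1r // pnatr_eq0.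
Qed.

Lemma masa_commutant y : commutant A y -> A y.
Proof.
case: (Amasa) => -[_ AD AZ _ Astar] _ _ Ay.
have Aystar : commutant A (star y) by apply: star_closed_commutant.
have re_y : A (y + star y).
  apply: masa_selfadjoint_commutant; first by rewrite starD starK addrC.
  by move=> s As; rewrite mulrDl mulrDr Ay // Aystar.
have im_y : A ('i%C *: (star y - y)).
  apply: masa_selfadjoint_commutant.
    by rewrite starZ starD star_opp starK conjc_i scaleNr -scalerN opprB.
  by move=> s As; rewrite -scalerAl -scalerAr mulrBl mulrBr Ay // Aystar.
by rewrite (cartesian_decomposition y); apply/AZ/AD => //; apply/AZ.
Qed.

End Commutant.

Lemma scalar_mx_comm_entry (T : ringType) (n : nat) (X : 'M[T]_n) (b : T) :
  X *m b%:M = b%:M *m X -> forall i j, X i j * b = b * X i j.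
Proof.
move=> /matrixP XbC i j; have := XbC i j.
by rewrite -!diag_const_mx mul_mx_diag mul_diag_mx !mxE.
Qed.

Theorem proposition3p4 (R : realType) (B : algType R[i])
    (star : B -> B) (nrm : B -> R) (HB : is_Cstar_algebra star nrm)
    (n : nat) (psi : B -> 'M[B]_n) (Hpsi : is_star_iso star psi)
    (Hpsi1 : psi 1 = 1%:M)
    (A : B -> Prop) (HA : is_masa star A)
    (* sigma_1(A) is contained in A, where sigma_1 = psi^{-1} o f with
       f(b) = I_n (x) b = b%:M; i.e. the unique b with psi b = a%:M lies in A *)
    (Hsigma : forall a b, A a -> psi b = a%:M -> A b) :
  forall (m : nat) (a : B), A a ->
    forall I J : m.-tuple 'I_n, A (@psi_iter R B n psi m a I J).
Proof.
case: Hpsi => _ _ psiM _ [sigma _ psiK].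
have [starD [starZ [starM [starK _]]]] := HB.
have [_ Aab _] := HA.
have A_psi_entry a : A a -> forall k l, A (psi a k l).
  move=> Aa k l; apply: (masa_commutant starD starZ starM starK HA) => b Ab.
  have Asb : A (sigma b%:M) by apply: (Hsigma b) => //; rewrite psiK.
  apply: (scalar_mx_comm_entry (X := psi a)).
  by rewrite -[b%:M]psiK -!psiM Aab.
by elim=> [|m IH] a Aa I J //=; apply: A_psi_entry; apply: IH.
Qed.
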